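(* Let $d,n,r\ge1$, $\mathbf r=(r,\dots,r)\in\mathbb{N}^d$, $\theta\ge0$, $0<\varepsilon,\mu<1$ and $R\ge1$. Then the set $\mathcal{B}_{R,\mu,\theta,\mathbf r}$ of $d$-mode tensors in $\mathbb{R}^{n\times\cdots\times n}$ satisfies $$\mathcal{N}(\mathcal{B}_{R,\mu,\theta,\mathbf r},\|\cdot\|_F,\varepsilon)\le\Big(\frac{6(d+1)}{\varepsilon}\Big)^{r^d+rnd}(R^2+\mu r)^{r^dd/2}(R^2+\mu r^d)^{dnr/2}R^{(d-1)dnr}.$$
   Context: For $R\ge0$, $\mu,\theta\ge0$, $\mathcal{B}_{R,\mu,\theta,\mathbf r}$ is the set of $\mathcal{X}\in\mathbb{R}^{n\times\cdots\times n}$ ($d$ modes) that can be written $\mathcal{X}=\sum_{k_1,\dots,k_d=1}^{r}\mathcal{C}(k_1,\dots,k_d)\,\mathbf{u}^1_{k_1}\circ\cdots\circ\mathbf{u}^d_{k_d}$ ($\circ$ outer product, $\mathbf{u}^i_k\in\mathbb{R}^n$) such that (a) $\|\mathbf{u}^i_k\|_2\le R$ for all $i,k$; (b) $|\langle\mathbf{u}^i_k,\mathbf{u}^i_{k'}\rangle|\le\mu$ for all $i$, $k\ne k'$; (c) $\|\mathcal{C}\|_F=1$; (d) for each $i$ and $p\ne q$, $\sum_{k_j,\,j\ne i}\mathcal{C}(k_1,\dots,p,\dots,k_d)\mathcal{C}(k_1,\dots,q,\dots,k_d)=0$ ($p,q$ in position $i$); (e) $\|\mathcal{X}\|_F\ge\theta$.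 $\mathcal{N}(\mathcal{S},\|\cdot\|_F,t)$ is the minimal cardinality of a subset of $\mathcal{S}$ such that every element of $\mathcal{S}$ is within Frobenius distance $t$ of some element of the subset. *)

From HB Require Import structures.
From mathcomp Require Import all_boot all_order all_algebra.
From mathcomp Require Import all_classical all_reals all_analysis.
Set Implicit Arguments. Unset Strict Implicit. Unset Printing Implicit Defensive.
Import Order.TTheory GRing.Theory Num.Theory.
Local Open Scope ring_scope.
Local Open Scope classical_set_scope.

Definition tensor (R : realType) (d n : nat) := {ffun 'I_d -> 'I_n} -> R.

Definition frob (R : realType) (d n : nat) (X : tensor R d n) : R :=
  Num.sqrt (\sum_(idx : {ffun 'I_d -> 'I_n}) X idx ^+ 2).

Definition vnorm2 (R : realType) (n : nat) (u : 'I_n -> R) : R :=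
  Num.sqrt (\sum_(j < n) u j ^+ 2).
Definition vdot (R : realType) (n : nat) (u v : 'I_n -> R) : R :=
  \sum_(j < n) u j * v j.

Definition kset (d r : nat) (k : {ffun 'I_d -> 'I_r}) (i : 'I_d) (q : 'I_r)
  : {ffun 'I_d -> 'I_r} := [ffun j => if j == i then q else k j].

Definition Bset (R : realType) (d n r : nat) (Rb mu theta : R)
  : set (tensor R d n) :=
  [set X : tensor R d n | exists (C : {ffun 'I_d -> 'I_r} -> R) (u : 'I_d -> 'I_r -> 'I_n -> R),
     [/\ (forall idx : {ffun 'I_d -> 'I_n}, X idx =
            \sum_(k : {ffun 'I_d -> 'I_r}) C k * \prod_(i < d) u i (k i) (idx i)),
         (forall i k, vnorm2 (u i k) <= Rb),
         (forall i k k', k != k' -> `|vdot (u i k) (u i k')| <= mu),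
         Num.sqrt (\sum_(k : {ffun 'I_d -> 'I_r}) C k ^+ 2) = 1 /\
         (forall (i : 'I_d) (p q : 'I_r), p != q ->
            \sum_(k : {ffun 'I_d -> 'I_r} | k i == p) C k * C (kset k i q) = 0)
       & frob X >= theta]].

Definition is_cover (R : realType) (d n : nat) (S : set (tensor R d n)) (t : R)
  (m : nat) (N : 'I_m -> tensor R d n) : Prop :=
  (forall j, S (N j)) /\
  (forall X, S X -> exists j, frob (fun idx => X idx - N j idx) <= t).

(* Covering number: minimal cardinality of such a cover (+oo if none). *)
Definition covering_number (R : realType) (d n : nat) (S : set (tensor R d n))
  (t : R) : \bar R :=
  ereal_inf [set (m%:R)%:E | m in [set m | exists N : 'I_m -> tensor R d n,
                                            is_cover S t N]].

From HB Require Import structures.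
From mathcomp Require Import all_boot all_order all_algebra.
From mathcomp Require Import all_classical all_reals all_analysis.
From mathcomp Require Import measurable_realfun ring lra zify.
Set Implicit Arguments. Unset Strict Implicit. Unset Printing Implicit Defensive.
Import Order.TTheory GRing.Theory Num.Theory numFieldNormedType.Exports.
Local Open Scope ring_scope.

(* Parametrize the tensors of [Bset] by a core [C] and factors [u], and
   quantize every coordinate of [(C, u)] on a grid. Two parameters in the same
   cell give tensors within [eps]: telescoping over the modes writes the
   difference as [d + 1] Tucker tensors, each controlled by Schur's test on
   the Gram matrices of the nearly orthogonal factors (and, where a factor is
   perturbed, by the orthogonality of the slices of the core). The occupied
   cells are lattice points of an ellipsoid; giving each cell a Gaussian
   weight, at least [1] on the ellipsoid, and comparing the total weight with
   the Gaussian integral bounds their number. *)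

Section GaussianSums.
Local Open Scope classical_set_scope.
Variable R : realType.
Local Notation mu := (@lebesgue_measure R).

Lemma gauss_fun_le (x y : R) : 0 <= x -> x <= y -> gauss_fun y <= gauss_fun x.
Proof.
move=> x0 xy; rewrite /gauss_fun ler_expR lerN2.
by rewrite ler_sqr ?nnegrE // (le_trans x0).
Qed.

Lemma measurable_EFin_gauss_fun (D : set R) : measurable_fun D (EFin \o @gauss_fun R).
Proof. by apply/measurable_EFinP; apply: measurable_funTS; exact: measurable_gauss_fun. Qed.

(* Right-endpoint Riemann sums of a decreasing function are lower sums. *)
Lemma riemann_gauss_le_integral (s : R) (M : nat) : 0 < s ->
  ((\sum_(k < M) s * gauss_fun (s * k.+1%:R))%:E <=
   \int[mu]_(x in `[0%R, (s * M%:R)%R]) (gauss_fun x)%:E)%E.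
Proof.
move=> s0; elim: M => [|M IH].
  by rewrite big_ord0; apply: integral_ge0 => x _; rewrite lee_fin gauss_fun_ge0.
have sM0 : 0 <= s * M%:R by rewrite mulr_ge0 // ltW.
have sMM : s * M%:R <= s * M.+1%:R by rewrite ler_pM2l // ler_nat.
rewrite big_ord_recr /= EFinD (@itv_bndbnd_setU _ _ _ (BRight (s * M%:R))) ?bnd_simp //.
rewrite ge0_integral_setU //; last 3 first.
- exact: measurable_EFin_gauss_fun.
- by move=> x _; rewrite lee_fin gauss_fun_ge0.
- rewrite disj_set2E; apply/eqP/seteqP; split => // x /= [].
  by rewrite !in_itv /= => /andP[_ xM] /andP[Mx _]; move: (lt_le_trans Mx xM); rewrite ltxx.
apply: leeD; first exact: IH.
apply: (@le_trans _ _ (\int[mu]_(x in `](s * M%:R)%R, (s * M.+1%:R)%R])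
                        (cst (gauss_fun (s * M.+1%:R))%:E) x))%E.
  rewrite integral_cst //= lebesgue_measure_itv /= lte_fin ltr_pM2l // ltr_nat ltnSn.
  by rewrite -EFinD -EFinM lee_fin -mulrBr -natrB // subSnn mulr1 mulrC.
apply: ge0_le_integral => //.
- by move=> x _; rewrite /cst lee_fin gauss_fun_ge0.
- exact: measurable_EFin_gauss_fun.
move=> x; rewrite /= in_itv /= => /andP[Mx xM]; rewrite lee_fin.
exact: gauss_fun_le (le_trans sM0 (ltW Mx)) xM.
Qed.

Lemma riemann_gauss_le (s : R) (M : nat) : 0 < s ->
  \sum_(k < M) s * gauss_fun (s * k.+1%:R) <= Num.sqrt pi / 2.
Proof.
move=> s0; rewrite -lee_fin -integral0y_gauss.
apply: le_trans (riemann_gauss_le_integral M s0) _.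
apply: ge0_subset_integral => //.
- exact: measurable_EFin_gauss_fun.
- by move=> x _; rewrite lee_fin gauss_fun_ge0.
- by move=> x /=; rewrite !in_itv /= => /andP[-> _].
Qed.

End GaussianSums.

Section GaussianGrid.
Variable R : realType.

Lemma cos_coeff'E (x : R) n :
  cos_coeff' x n = (-1) ^+ (odd n) * x ^+ n.*2 / (n.*2)`!%:R.
Proof. by rewrite /cos_coeff' -exprnP signr_odd. Qed.

(* The cosine series at 8/5 is alternating with decreasing terms after the
   third one, so it is bounded above by its partial sum 1 - x^2/2 + x^4/24 < 0. *)
Lemma cos_8_5_lt0 : cos (8/5 : R) < 0.
Proof.
rewrite -(opprK (cos _)) oppr_lt0; have /cvgN cosE := @cvg_cos_coeff' R (8/5).
rewrite -(cvg_lim (@Rhausdorff R) cosE).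
apply: (@lt_trans _ _ (\sum_(0 <= i < 3) - cos_coeff' (8/5 : R) i)).
  rewrite !big_nat_recl // big_nil !cos_coeff'E /= !expr0 !expr1 /= !mul1r.
  rewrite (_ : (0.*2)`!%:R = 1 :> R) // (_ : (1.*2)`!%:R = 2 :> R) //.
  rewrite (_ : (2.*2)`!%:R = 24 :> R) // !exprS expr0; lra.
rewrite -seriesN lt_sum_lim_series //; first by move/cvgP : cosE; rewrite seriesN.
move=> k; rewrite !cos_coeff'E /= add0n odd_double /= expr1 expr0.
have -> : (3 + k.*2.+1).*2 = ((3 + k.*2).*2).+2 by rewrite addnS doubleS.
set m := (3 + k.*2).*2; have m6 : (6 <= m)%N by rewrite /m -addnn; lia.
clearbody m.
rewrite (factS m.+1) (factS m) !natrM exprSr exprS mulN1r mulNr opprK mul1r mulrA.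
have F0 : 0 < (m`!)%:R :> R by rewrite ltr0n fact_gt0.
have X0 : 0 < (8/5 : R) ^+ m by rewrite exprn_gt0.
have P56 : 56 <= m.+2%:R * m.+1%:R :> R by rewrite -natrM (ler_nat _ 56); nia.
move: F0 X0 P56; set F := (m`!)%:R; set X := (8/5 : R) ^+ m.
set P := m.+2%:R * m.+1%:R => F0 X0 P56.
have P0 : 0 < P by apply: lt_le_trans P56.
rewrite (_ : 8 / 5 * X * (8 / 5) / (P * F) = (X / F) * (64 / 25 / P)); last first.
  by field; rewrite !gt_eqF.
rewrite -{1}(mulr1 (X / F)) -mulrBr mulr_gt0 ?divr_gt0 // subr_gt0 ltr_pdivrMr // mul1r.
by apply: lt_le_trans P56; lra.
Qed.

Lemma pi_lt_16_5 : pi < 16/5 :> R.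
Proof.
rewrite ltNge; apply/negP => pi_ge.
suff : 0 <= cos (8/5 : R) by rewrite leNgt cos_8_5_lt0.
apply: cos_ge0_pihalf; apply/andP; split; last lra.
by apply: le_trans (_ : 0 <= _) => //; rewrite oppr_le0 divr_ge0 // pi_ge0.
Qed.

Lemma sqrt_pi_le : Num.sqrt pi <= 9/5 :> R.
Proof.
rewrite -(@ger0_norm _ (9/5 : R)); last lra.
rewrite -sqrtr_sqr ler_sqrt; last lra.
by rewrite expr2; apply: ltW; apply: (lt_trans pi_lt_16_5); lra.
Qed.

Lemma expR_le_inv_1B (y : R) : 0 <= y < 1 -> expR y <= (1 - y)^-1.
Proof.
move=> /andP[y0 y1]; have -> : expR y = (expR (- y))^-1 by rewrite expRN invrK.
by rewrite lef_pV2 ?posrE ?expR_gt0 ?subr_gt0 // expR_ge1Dx.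
Qed.

Lemma expR_25_64_le : expR (25/64) <= 151/100 :> R.
Proof.
rewrite (_ : 25/64 = 4%:R * (25/256)) ?(expRM_natl 4); last by field.
have h : expR (25/256) <= (1 - 25/256)^-1 :> R by apply: expR_le_inv_1B; lra.
apply: (le_trans (lerXn2r 4 _ _ h)); rewrite ?nnegrE ?expR_ge0 ?invr_ge0 //; try lra.
by rewrite (_ : (1 - 25/256 : R)^-1 = 256/231); [lra | field].
Qed.

(* [bool * 'I_M.+1] encodes the signed grid [-M..M], with [0] counted twice.
   The sum is compared with the Gaussian integral; the scaling [5/8] makes the
   constant come out as [6] for all [K >= 2]. *)
Lemma gauss_grid_le (K : R) (M : nat) : 2 <= K ->
  expR ((5/8) ^+ 2) * \sum_(y : bool * 'I_M.+1) gauss_fun (5/8 * y.2%:R / K)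
  <= 6 * K.
Proof.
move=> K2.
have -> : \sum_(y : bool * 'I_M.+1) gauss_fun (5/8 * y.2%:R / K) =
    2 * (1 + \sum_(k < M) gauss_fun (5/8 / K * k.+1%:R)).
  have g0 : gauss_fun (0 : R) = 1 by rewrite /gauss_fun expr0n oppr0 expR0.
  rewrite -(pair_bigA _ (fun _ (k : 'I_M.+1) => gauss_fun (5/8 * k%:R / K))) /=.
  rewrite big_bool /= big_ord_recl mulr0 mul0r g0.
  rewrite [in LHS](eq_bigr (fun k : 'I_M => gauss_fun (5/8 / K * k.+1%:R))); first ring.
  by move=> k _; rewrite mulrAC.
set s := 5/8 / K; have s0 : 0 < s by rewrite divr_gt0 //; lra.
have S0 : 0 <= \sum_(k < M) gauss_fun (s * k.+1%:R).
  by apply: sumr_ge0 => k _; exact: gauss_fun_ge0.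
have SK : \sum_(k < M) gauss_fun (s * k.+1%:R) <= 9/5 * K * (8/5) / 2.
  have := riemann_gauss_le M s0; rewrite -mulr_sumr -ler_pdivlMl // => S.
  apply: le_trans S _; rewrite /s invf_div.
  have K0 : 0 <= K by lra.
  have := ler_wpM2l K0 sqrt_pi_le; lra.
have E := expR_25_64_le; rewrite (_ : (5/8) ^+ 2 = 25/64 :> R) in E *; last by field.
have E0 := expR_ge0 (25/64 : R); nra.
Qed.

End GaussianGrid.

Section LatticeCount.
Variables (R : realType) (D : finType) (M : nat).

(* Each point of [S] has Gaussian weight at least [1], and the total Gaussian
   weight of the grid factorizes over the coordinates. *)
Lemma card_le_gauss_weight (K : D -> R) (a : R) (S : {set {ffun D -> bool * 'I_M.+1}}) :
  (forall z, z \in S -> \sum_c ((z c).2%:R / K c) ^+ 2 <= #|D|%:R) ->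
  #|S|%:R <= \prod_c (expR (a ^+ 2) * \sum_(y : bool * 'I_M.+1) gauss_fun (a * y.2%:R / K c)).
Proof.
move=> inS; set w := fun c (y : bool * 'I_M.+1) => expR (a ^+ 2) * gauss_fun (a * y.2%:R / K c).
have w0 c y : 0 <= w c y by rewrite mulr_ge0 ?expR_ge0 ?gauss_fun_ge0.
have weight_ge1 z : z \in S -> 1 <= \prod_c w c (z c).
  move=> /inS zS; rewrite /w /gauss_fun.
  under eq_bigr => c _ do rewrite -expRD.
  rewrite -expR_sum -[X in X <= _]expR0 ler_expR sumrB sumr_const subr_ge0 -mulr_natr.
  under eq_bigr => c _ do rewrite -mulrA exprMn.
  by rewrite -mulr_sumr ler_wpM2l ?sqr_ge0.
under eq_bigr do rewrite big_distrr /=.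
change (#|S|%:R <= \prod_c \sum_y w c y).
rewrite bigA_distr_bigA /= -sum1_card natr_sum.
apply: le_trans (_ : \sum_(z in S) \prod_c w c (z c) <= _).
  exact: ler_sum.
rewrite [X in _ <= X](bigID (mem S)) /= lerDl.
by apply: sumr_ge0 => z _; apply: prodr_ge0.
Qed.

Lemma card_lattice_ellipsoid_le (K : D -> R) (S : {set {ffun D -> bool * 'I_M.+1}}) :
  (forall c, 2 <= K c) ->
  (forall z, z \in S -> \sum_c ((z c).2%:R / K c) ^+ 2 <= #|D|%:R) ->
  #|S|%:R <= \prod_c (6 * K c).
Proof.
move=> K2 inS; apply: le_trans (card_le_gauss_weight (5/8) inS) _.
apply: ler_prod => c _; rewrite gauss_grid_le // andbT.
by rewrite mulr_ge0 ?expR_ge0 // sumr_ge0 // => y _; exact: gauss_fun_ge0.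
Qed.

End LatticeCount.

Section Quantization.
Variables (R : realType) (M : nat).

Lemma truncn_eq_dist_lt1 (a b : R) : 0 <= a -> 0 <= b ->
  Num.truncn a = Num.truncn b -> `|a - b| < 1.
Proof.
move=> a0 b0 ab; have /andP[la ua] := truncn_itv a0; have /andP[lb ub] := truncn_itv b0.
rewrite ab -natr1 in la ua; rewrite -natr1 in ub.
by rewrite ltr_norml; apply/andP; split; lra.
Qed.

Lemma dist_same_sign (x y : R) : (x < 0) = (y < 0) -> `|x - y| = `| `|x| - `|y| |.
Proof.
case: (ltP x 0) => [x0 /esym y0|x0 /esym /negbT]; last rewrite -leNgt => y0.
  by rewrite (ltr0_norm x0) (ltr0_norm y0) -opprD normrN addrC.
by rewrite (ger0_norm x0) (ger0_norm y0).
Qed.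

Definition quantize (h x : R) : bool * 'I_M.+1 :=
  (x < 0, inord (Num.truncn (`|x| / h))).

Lemma quantize_level (h x : R) : 0 < h -> (Num.truncn (`|x| / h) <= M)%N ->
  (quantize h x).2%:R <= `|x| / h.
Proof. by move=> h0 xM; rewrite /= inordK ?ltnS // truncn_le divr_ge0 // ltW. Qed.

Lemma quantize_close (h x y : R) : 0 < h ->
  (Num.truncn (`|x| / h) <= M)%N -> (Num.truncn (`|y| / h) <= M)%N ->
  quantize h x = quantize h y -> `|x - y| < h.
Proof.
move=> h0 xM yM [sxy] /(congr1 val); rewrite /= !inordK ?ltnS // => txy.
have x0 := divr_ge0 (normr_ge0 x) (ltW h0); have y0 := divr_ge0 (normr_ge0 y) (ltW h0).
have := truncn_eq_dist_lt1 x0 y0 txy.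
rewrite -mulrBl normrM (@gtr0_norm _ h^-1) ?invr_gt0 // ltr_pdivrMr // mul1r.
by rewrite dist_same_sign.
Qed.

End Quantization.

Section Covering.
Variables (R : realType) (d n : nat).

Lemma covering_number_le_card (P : Type) (Z : finType) (S : set (tensor R d n))
    (f : P -> tensor R d n) (ok : P -> Prop) (key : P -> Z) (t : R) :
  (forall p, ok p -> S (f p)) ->
  (forall X, S X -> exists2 p, ok p & f p = X) ->
  (forall p q, ok p -> ok q -> key p = key q ->
     frob (fun idx => f p idx - f q idx) <= t) ->
  (covering_number S t <= #|[set z | `[< exists2 p, ok p & key p = z >]]|%:R%:E)%E.
Proof.
move=> okS Sok close; set Z0 := [set z | _].
have repP z : z \in Z0 -> {p | ok p & key p = z} by rewrite inE => /asboolP/cid2.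
pose N j := f (s2val (repP _ (enum_valP j))).
apply: ereal_inf_lbound; exists #|Z0| => //; exists N; split.
  by move=> j; apply/okS/(s2valP (repP _ _)).
move=> _ /Sok[p okp <-].
have pZ0 : key p \in Z0 by rewrite inE; apply/asboolP; exists p.
exists (enum_rank_in pZ0 (key p)); apply: close => //; first exact: (s2valP (repP _ _)).
by rewrite (s2valP' (repP _ _)) enum_rankK_in.
Qed.

End Covering.

Section Inequalities.
Variable R : realFieldType.

(* Schur's test: bound each term by [(a k ^+ 2 + a k' ^+ 2) / 2 * g k k'],
   then sum the two halves along rows and along columns respectively. *)
Lemma quadratic_form_le_schur (I : finType) (a : I -> R) (G g : I -> I -> R) (s : R) :
  (forall k k', `|G k k'| <= g k k') ->
  (forall k, \sum_k' g k k' <= s) -> (forall k', \sum_k g k k' <= s) ->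
  \sum_k \sum_k' a k * a k' * G k k' <= s * \sum_k a k ^+ 2.
Proof.
move=> Gg rows cols; have g0 k k' : 0 <= g k k' by exact: le_trans (Gg k k').
have termP k k' : (a k * a k' * G k k') *+ 2 <= (a k ^+ 2 + a k' ^+ 2) * g k k'.
  have am := (leif_mean_square_scaled `|a k| `|a k'|).1.
  rewrite !real_normK ?num_real // in am.
  apply: le_trans (_ : `|a k * a k' * G k k'| *+ 2 <= _); first by rewrite ler_pMn2r // ler_norm.
  rewrite !normrM -mulrnAl; apply: ler_pM => //; by rewrite mulrn_wge0 ?mulr_ge0.
rewrite -(ler_pMn2r (ltn0Sn 1)) -sumrMnl.
apply: le_trans (_ : \sum_k \sum_k' (a k ^+ 2 + a k' ^+ 2) * g k k' <= _).
  by apply: ler_sum => k _; rewrite -sumrMnl; apply: ler_sum => k' _; exact: termP.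
rewrite (eq_bigr (fun k => a k ^+ 2 * \sum_k' g k k' + \sum_k' a k' ^+ 2 * g k k')); last first.
  by move=> k _; rewrite mulr_sumr -big_split; apply: eq_bigr => k' _; rewrite mulrDl.
rewrite big_split /= [X in _ + X]exchange_big /= mulr2n mulr_sumr.
by apply: lerD; apply: ler_sum => k _; rewrite -?mulr_sumr [s * _]mulrC ler_wpM2l ?sqr_ge0.
Qed.

Lemma sqr_sum_le (I : finType) (a : I -> R) :
  (\sum_i a i) ^+ 2 <= #|I|%:R * \sum_i a i ^+ 2.
Proof.
rewrite expr2 mulr_suml (eq_bigr (fun k => \sum_k' a k * a k' * 1)); last first.
  by move=> k _; rewrite mulr_sumr; apply: eq_bigr => k' _; rewrite mulr1.
apply: (@quadratic_form_le_schur _ a (fun _ _ => 1) (fun _ _ => 1)) => [k k'|k|k'];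
  by rewrite ?normr1 // sumr_const.
Qed.

Lemma sqr_addr_sum_le (m : nat) (a : R) (b : 'I_m -> R) :
  (a + \sum_(i < m) b i) ^+ 2 <= m.+1%:R * (a ^+ 2 + \sum_(i < m) b i ^+ 2).
Proof.
have := sqr_sum_le (fun i : 'I_m.+1 => oapp b a (unlift ord0 i)).
rewrite card_ord !big_ord_recl /= unlift_none (eq_bigr b) => [|i _]; last by rewrite liftK.
by rewrite [in X in _ <= X](eq_bigr (fun i => b i ^+ 2)) => // i _; rewrite liftK.
Qed.

Lemma convex_exprn_1D (t b : R) m : 0 <= t <= 1 -> 0 <= b ->
  (1 + t * b) ^+ m <= 1 + t * ((1 + b) ^+ m - 1).
Proof.
move=> /andP[t0 t1] b0; elim: m => [|m IH]; first by rewrite !expr0 subrr mulr0 addr0.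
have X1 : 1 <= (1 + b) ^+ m by rewrite exprn_ege1 // lerDl.
have := ler_wpM2r (addr_ge0 ler01 (mulr_ge0 t0 b0)) IH; rewrite !exprSr.
set X := (1 + b) ^+ m in X1 *; set Y := (1 + t * b) ^+ m.
have tt : t * t <= t by rewrite -[leRHS]mul1r ler_wpM2r.
have Xb : 0 <= b * (X - 1) by rewrite mulr_ge0 // subr_ge0.
have := ler_wpM2r Xb tt; nra.
Qed.

Lemma gram_bound_expr_le (a mu : R) (r m : nat) : 1 <= a -> 0 <= mu <= 1 -> (1 <= r)%N ->
  (a + (r.-1)%:R * mu) ^+ m * a <= (a + mu * (r ^ m.+1)%:R) * a ^+ m.
Proof.
move=> a1 /andP[mu0 mu1] r1; have a0 : 0 < a by apply: lt_le_trans a1.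
set b := (r.-1)%:R * mu; have b0 : 0 <= b by rewrite mulr_ge0.
have conv_r : (1 + mu * (r.-1)%:R) ^+ m <= 1 + mu * ((r ^ m)%:R - 1).
  have -> : (r ^ m)%:R = (1 + (r.-1)%:R) ^+ m :> R.
    by rewrite natrX -[in LHS](prednK r1) mulrS.
  by apply: convex_exprn_1D; rewrite ?mu0.
have ia : 0 <= a^-1 <= 1 by rewrite invr_ge0 ltW //= invr_le1 // ?unitfE ?gt_eqF.
have conv_a := convex_exprn_1D m ia b0.
have rm : (r ^ m)%:R <= (r ^ m.+1)%:R :> R by rewrite ler_nat expnS leq_pmull.
have -> : a + b = a * (1 + a^-1 * b) by field; rewrite gt_eqF.
rewrite exprMn -mulrA [X in _ <= X]mulrC ler_pM2l ?exprn_gt0 //.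
apply: le_trans (ler_wpM2r (ltW a0) conv_a) _.
rewrite mulrDl mul1r mulrAC mulVf ?gt_eqF // mul1r lerD2l.
rewrite [mu * _]mulrC -/b in conv_r; have := ler_wpM2l mu0 rm; nra.
Qed.

Lemma sumsq_le_card (I : finType) (f : I -> R) (h : R) :
  (forall i, `|f i| <= h) -> \sum_i f i ^+ 2 <= #|I|%:R * h ^+ 2.
Proof.
move=> fh; apply: le_trans (_ : \sum_(i : I) h ^+ 2 <= _); last by rewrite sumr_const mulr_natl.
apply: ler_sum => i _; rewrite -real_normK ?num_real //.
by apply: lerXn2r; rewrite ?nnegrE ?normr_ge0 ?fh // (le_trans _ (fh i)).
Qed.

End Inequalities.

Section CoreIndex.
Variables d r : nat.
Implicit Types (k : {ffun 'I_d -> 'I_r}) (i j : 'I_d) (p q : 'I_r).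

Lemma kset_at k i q : kset k i q i = q.
Proof. by rewrite /kset ffunE eqxx. Qed.

Lemma kset_ne k i q j : j != i -> kset k i q j = k j.
Proof. by rewrite /kset ffunE => /negPf ->. Qed.

Lemma kset_kset k i p q : kset (kset k i p) i q = kset k i q.
Proof. by apply/ffunP => j; rewrite /kset !ffunE; case: eqP. Qed.

Lemma kset_id k i : kset k i (k i) = k.
Proof. by apply/ffunP => j; rewrite /kset !ffunE; case: eqP => // ->. Qed.

Lemma reindex_kset (T : Type) (idx : T) (op : Monoid.com_law idx)
    (F : {ffun 'I_d -> 'I_r} -> T) i p q :
  \big[op/idx]_(k : {ffun 'I_d -> 'I_r} | k i == q) F (kset k i p) =
  \big[op/idx]_(k : {ffun 'I_d -> 'I_r} | k i == p) F k.
Proof.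
rewrite [RHS](reindex_onto (fun k => kset k i p) (fun k => kset k i q)) /=.
  apply: eq_bigl => k; rewrite kset_at eqxx kset_kset /=.
  by apply/eqP/eqP => [<-|<-]; [rewrite kset_id | rewrite kset_at].
by move=> k /eqP kp; rewrite kset_kset -kp kset_id.
Qed.

Lemma partition_big_coord (T : Type) (idx : T) (op : Monoid.com_law idx)
    (F : {ffun 'I_d -> 'I_r} -> T) i :
  \big[op/idx]_p \big[op/idx]_(k : {ffun 'I_d -> 'I_r} | k i == p) F k =
  \big[op/idx]_(k : {ffun 'I_d -> 'I_r}) F k.
Proof.
rewrite (exchange_big_dep xpredT) //=; apply: eq_bigr => k _.
by rewrite (big_pred1 (k i)) // => p; rewrite /= eq_sym.
Qed.

End CoreIndex.

Section Tucker.
Variables (R : realType) (d n r : nat).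
Implicit Types (C : {ffun 'I_d -> 'I_r} -> R) (u v : 'I_d -> 'I_r -> 'I_n -> R).

Definition tucker C u : tensor R d n :=
  fun idx => \sum_(k : {ffun 'I_d -> 'I_r}) C k * \prod_(i < d) u i (k i) (idx i).

Lemma sumsq_tucker C u :
  \sum_idx tucker C u idx ^+ 2 =
  \sum_(k : {ffun 'I_d -> 'I_r}) \sum_(k' : {ffun 'I_d -> 'I_r})
     C k * C k' * \prod_(i < d) vdot (u i (k i)) (u i (k' i)).
Proof.
transitivity (\sum_(idx : {ffun 'I_d -> 'I_n}) \sum_(k : {ffun 'I_d -> 'I_r})
   \sum_(k' : {ffun 'I_d -> 'I_r})
     C k * C k' * \prod_(i < d) (u i (k i) (idx i) * u i (k' i) (idx i))).
  apply: eq_bigr => idx _; rewrite /tucker expr2 mulr_suml; apply: eq_bigr => k _.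
  by rewrite mulr_sumr; apply: eq_bigr => k' _; rewrite big_split /=; ring.
rewrite exchange_big /=; apply: eq_bigr => k _; rewrite exchange_big /=.
apply: eq_bigr => k' _; rewrite -mulr_sumr /vdot.
by rewrite (bigA_distr_bigA (fun i j => u i (k i) j * u i (k' i) j)).
Qed.

Lemma sumsq_tucker_le C u (g : 'I_d -> 'I_r -> 'I_r -> R) (s : 'I_d -> R) :
  (forall i p q, `|vdot (u i p) (u i q)| <= g i p q) ->
  (forall i p, \sum_q g i p q <= s i) -> (forall i q, \sum_p g i p q <= s i) ->
  \sum_idx tucker C u idx ^+ 2 <= (\prod_(i < d) s i) * \sum_k C k ^+ 2.
Proof.
move=> Gg rows cols; have g0 i p q : 0 <= g i p q by exact: le_trans (Gg i p q).
rewrite sumsq_tucker.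
apply: (@quadratic_form_le_schur _ _ C _ (fun k k' => \prod_i g i (k i) (k' i))).
- by move=> k k'; rewrite normr_prod; apply: ler_prod => i _; rewrite normr_ge0 Gg.
- move=> k; rewrite -(bigA_distr_bigA (fun i q => g i (k i) q)).
  by apply: ler_prod => i _; rewrite sumr_ge0 ?rows.
- move=> k'; rewrite -(bigA_distr_bigA (fun i p => g i p (k' i))).
  by apply: ler_prod => i _; rewrite sumr_ge0 ?cols.
Qed.

Variables (Rb mu : R).

Definition gram_bounded (w : 'I_r -> 'I_n -> R) : Prop :=
  (forall p, vdot (w p) (w p) <= Rb ^+ 2) /\
  (forall p q, p != q -> `|vdot (w p) (w q)| <= mu).

(* Gershgorin's bound on the norm of a [gram_bounded] Gram matrix. *)
Definition gram_norm_bound : R := Rb ^+ 2 + (r.-1)%:R * mu.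

Definition gram_majorant (p q : 'I_r) : R := if p == q then Rb ^+ 2 else mu.

Lemma vdot_ge0 (w : 'I_n -> R) : 0 <= vdot w w.
Proof. by apply: sumr_ge0 => j _; rewrite -expr2 sqr_ge0. Qed.

Lemma gram_majorantP w p q : gram_bounded w -> `|vdot (w p) (w q)| <= gram_majorant p q.
Proof.
case=> diag offdiag; rewrite /gram_majorant; case: eqP => [->|/eqP]; last exact: offdiag.
by rewrite ger0_norm ?vdot_ge0.
Qed.

Lemma sum_gram_majorant p : \sum_q gram_majorant p q = gram_norm_bound.
Proof.
rewrite (bigD1 p) //= /gram_majorant eqxx; congr (_ + _).
rewrite (eq_bigr (fun _ => mu)) => [|q /negPf]; last by rewrite eq_sym => ->.
by rewrite sumr_const cardC1 card_ord mulr_natl.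
Qed.

Lemma gram_majorantC p q : gram_majorant p q = gram_majorant q p.
Proof. by rewrite /gram_majorant eq_sym; case: eqP => // ->. Qed.

Lemma sumsq_tucker_gram_le C u : (forall i, gram_bounded (u i)) ->
  \sum_idx tucker C u idx ^+ 2 <= gram_norm_bound ^+ d * \sum_k C k ^+ 2.
Proof.
move=> uG; rewrite -[d in _ ^+ d]card_ord -prodr_const.
apply: (@sumsq_tucker_le C u (fun _ => gram_majorant)) => [i p q|i p|i q].
- exact: gram_majorantP.
- by rewrite sum_gram_majorant.
- by under eq_bigr do rewrite gram_majorantC; rewrite sum_gram_majorant.
Qed.

Hypothesis mu_ge0 : 0 <= mu.

Lemma gram_norm_bound_ge0 : 0 <= gram_norm_bound.
Proof. by rewrite addr_ge0 ?sqr_ge0 // mulr_ge0. Qed.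

Definition core_orthogonal C : Prop :=
  forall (i : 'I_d) (p q : 'I_r), p != q ->
    \sum_(k : {ffun 'I_d -> 'I_r} | k i == p) C k * C (kset k i q) = 0.

Lemma sumsq_lincomb (c : 'I_r -> R) (w : 'I_r -> 'I_n -> R) :
  \sum_j (\sum_p c p * w p j) ^+ 2 = \sum_p \sum_q c p * c q * vdot (w p) (w q).
Proof.
transitivity (\sum_j \sum_p \sum_q c p * c q * (w p j * w q j)).
  apply: eq_bigr => j _; rewrite expr2 mulr_suml; apply: eq_bigr => p _.
  by rewrite mulr_sumr; apply: eq_bigr => q _; ring.
rewrite exchange_big /=; apply: eq_bigr => p _; rewrite exchange_big /=.
by apply: eq_bigr => q _; rewrite /vdot mulr_sumr.
Qed.

Section ModeSlices.
Variables (t : 'I_d) (r0 : 'I_r).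

(* Fixing [idx t = j], [tucker C v] becomes a Tucker tensor whose mode-[t]
   factor is [e_r0 (x) e_j] and whose core absorbs [v t] along mode [t]. *)
Definition core_slice C v (j : 'I_n) (k : {ffun 'I_d -> 'I_r}) : R :=
  (k t == r0)%:R * \sum_p C (kset k t p) * v t p j.

Definition factor_slice v (j : 'I_n) (i : 'I_d) : 'I_r -> 'I_n -> R :=
  if i == t then (fun p j' => (p == r0)%:R * (j' == j)%:R) else v i.

Lemma tucker_slice C v j idx :
  tucker (core_slice C v j) (factor_slice v j) idx = (idx t == j)%:R * tucker C v idx.
Proof.
have prodE k : \prod_(i < d) factor_slice v j i (k i) (idx i) =
    (k t == r0)%:R * (idx t == j)%:R * \prod_(i < d | i != t) v i (k i) (idx i).
  rewrite (bigD1 t) //= /factor_slice eqxx; congr (_ * _).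
  by apply: eq_bigr => i /negPf ->.
rewrite /tucker; under eq_bigr do rewrite prodE.
have [tj|] := eqVneq (idx t) j; last first.
  by move=> _; rewrite mul0r big1 // => k _; rewrite mulr0 mul0r mulr0.
transitivity (\sum_(k : {ffun 'I_d -> 'I_r} | k t == r0) \sum_p
    C (kset k t p) * v t p j * \prod_(i < d | i != t) v i (kset k t p i) (idx i)).
  rewrite [RHS]big_mkcond /=; apply: eq_bigr => k _.
  rewrite /core_slice; case: eqP => _; last by rewrite !mul0r.
  rewrite !mul1r mulr_suml; apply: eq_bigr => p _; congr (_ * _).
  by apply: eq_bigr => i it; rewrite kset_ne.
rewrite exchange_big /= mul1r.
under eq_bigr => p _ do rewrite (reindex_kset _ (fun k => C k * v t p j *
   \prod_(i < d | i != t) v i (k i) (idx i)) t p r0).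
rewrite -(partition_big_coord _ (fun k => C k * \prod_(i < d) v i (k i) (idx i)) t).
apply: eq_bigr => p _; apply: eq_bigr => k /eqP kt.
by rewrite [in RHS](bigD1 t) //= kt tj mulrA.
Qed.

Lemma sumsq_tucker_slices C v :
  \sum_idx tucker C v idx ^+ 2 =
  \sum_j \sum_idx tucker (core_slice C v j) (factor_slice v j) idx ^+ 2.
Proof.
rewrite exchange_big /=; apply: eq_bigr => idx _; under eq_bigr do rewrite tucker_slice.
rewrite (bigD1 (idx t)) //= eqxx mul1r big1 ?addr0 // => j /negPf.
by rewrite eq_sym => ->; rewrite mul0r expr0n.
Qed.

Lemma vdot_factor_slice v j p q :
  vdot (factor_slice v j t p) (factor_slice v j t q) = (p == r0)%:R * (q == r0)%:R.
Proof.
rewrite /vdot /factor_slice eqxx (bigD1 j) //= eqxx !mulr1 big1 ?addr0 //.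
by move=> j' /negPf ->; rewrite !mulr0.
Qed.

Lemma sumsq_tucker_slice_le C v j : (forall i, i != t -> gram_bounded (v i)) ->
  \sum_idx tucker (core_slice C v j) (factor_slice v j) idx ^+ 2 <=
  gram_norm_bound ^+ d.-1 * \sum_k core_slice C v j k ^+ 2.
Proof.
move=> vG.
set g := fun i : 'I_d => if i == t then (fun p q : 'I_r => (p == q)%:R) else gram_majorant.
have -> : gram_norm_bound ^+ d.-1 =
    \prod_(i < d) (if i == t then 1 else gram_norm_bound).
  rewrite (bigD1 t) //= eqxx mul1r (eq_bigr (fun _ => gram_norm_bound)) => [|i /negPf -> //].
  by rewrite prodr_const cardC1 card_ord.
apply: (@sumsq_tucker_le _ _ g) => [i p q|i p|i q]; rewrite /g;
  case: (eqVneq i t) => [ti|it] /=.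
- rewrite ti vdot_factor_slice; case: (eqVneq p q) => [->|pq].
    by rewrite -natrM ger0_norm // ler_nat; case: (q == r0).
  case: (eqVneq p r0) => [pr0|]; last by rewrite mul0r normr0 ler0n.
  by rewrite -pr0 eq_sym (negPf pq) mulr0 normr0.
- by rewrite /factor_slice (negPf it); apply: gram_majorantP; exact: vG.
- by rewrite (bigD1 p) //= eqxx big1 ?addr0 // => q /negPf; rewrite eq_sym => ->.
- by rewrite sum_gram_majorant.
- by rewrite (bigD1 q) //= eqxx big1 ?addr0 // => p /negPf ->.
- by under eq_bigr do rewrite gram_majorantC; rewrite sum_gram_majorant.
Qed.

(* Orthogonality of the mode-[t] slices of [C] kills the cross terms. *)
Lemma sumsq_core_slices C v : core_orthogonal C ->
  \sum_j \sum_k core_slice C v j k ^+ 2 =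
  \sum_p vdot (v t p) (v t p) * \sum_(k : {ffun 'I_d -> 'I_r} | k t == p) C k ^+ 2.
Proof.
move=> Corth.
have slice_dot p q :
    \sum_(k : {ffun 'I_d -> 'I_r} | k t == r0) C (kset k t p) * C (kset k t q) =
    \sum_(k : {ffun 'I_d -> 'I_r} | k t == p) C k * C (kset k t q).
  rewrite -(reindex_kset _ (fun k => C k * C (kset k t q)) t p r0).
  by apply: eq_bigr => k _; rewrite kset_kset.
rewrite exchange_big /= big_mkcond /=.
transitivity (\sum_(k : {ffun 'I_d -> 'I_r} | k t == r0) \sum_p \sum_q
    C (kset k t p) * C (kset k t q) * vdot (v t p) (v t q)).
  rewrite [RHS]big_mkcond /=; apply: eq_bigr => k _.
  rewrite /core_slice; case: eqP => _; last by rewrite big1 // => j _; rewrite mul0r expr0n.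
  by under eq_bigr do rewrite mul1r; rewrite sumsq_lincomb.
rewrite exchange_big /=; apply: eq_bigr => p _; rewrite exchange_big /=.
rewrite (bigD1 p) //= [X in _ + X]big1 ?addr0 => [|q qp]; last first.
  by rewrite -mulr_suml slice_dot Corth ?mul0r // eq_sym.
rewrite -mulr_suml slice_dot mulrC; congr (_ * _); apply: eq_bigr => k /eqP kp.
by rewrite -kp kset_id expr2.
Qed.

Lemma sumsq_core_slices_le C v eU : core_orthogonal C ->
  (forall p, vdot (v t p) (v t p) <= eU) ->
  \sum_j \sum_k core_slice C v j k ^+ 2 <= eU * \sum_k C k ^+ 2.
Proof.
move=> Corth vU; rewrite sumsq_core_slices // -(partition_big_coord _ (fun k => C k ^+ 2) t).
rewrite mulr_sumr; apply: ler_sum => p _.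
by rewrite ler_wpM2r // sumr_ge0 // => k _; rewrite sqr_ge0.
Qed.

Lemma sumsq_tucker_mode_le C v eU : core_orthogonal C ->
  (forall p, vdot (v t p) (v t p) <= eU) -> (forall i, i != t -> gram_bounded (v i)) ->
  \sum_idx tucker C v idx ^+ 2 <= gram_norm_bound ^+ d.-1 * (eU * \sum_k C k ^+ 2).
Proof.
move=> Corth vU vG; rewrite sumsq_tucker_slices.
apply: le_trans (_ : \sum_j gram_norm_bound ^+ d.-1 * \sum_k core_slice C v j k ^+ 2 <= _).
  by apply: ler_sum => j _; exact: sumsq_tucker_slice_le.
by rewrite -mulr_sumr ler_wpM2l ?exprn_ge0 ?gram_norm_bound_ge0 ?sumsq_core_slices_le.
Qed.

End ModeSlices.

Definition factors_mix u u' (t : nat) : 'I_d -> 'I_r -> 'I_n -> R :=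
  fun i => if (i < t)%N then u' i else u i.

Definition factors_step u u' (t : 'I_d) : 'I_d -> 'I_r -> 'I_n -> R :=
  fun i => if (i < t)%N then u' i
           else if i == t then (fun p j => u t p j - u' t p j) else u i.

Lemma tucker_subl C C' v idx :
  tucker C v idx - tucker C' v idx = tucker (fun k => C k - C' k) v idx.
Proof. by rewrite /tucker -sumrB; apply: eq_bigr => k _; rewrite mulrBl. Qed.

Lemma tucker_mix_step C u u' (t : 'I_d) idx :
  tucker C (factors_mix u u' t) idx - tucker C (factors_mix u u' t.+1) idx =
  tucker C (factors_step u u' t) idx.
Proof.
rewrite /tucker -sumrB; apply: eq_bigr => k _; rewrite -mulrBr; congr (_ * _).
have others (w : 'I_d -> 'I_r -> 'I_n -> R) :
    (forall i, i != t -> w i = factors_mix u u' t.+1 i) ->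
    \prod_(i < d) w i (k i) (idx i) =
    w t (k t) (idx t) * \prod_(i < d | i != t) factors_mix u u' t.+1 i (k i) (idx i).
  move=> wE; rewrite (bigD1 t) //=; congr (_ * _).
  by apply: eq_bigr => i it; rewrite wE.
have neq_lt i : i != t -> (i < t.+1)%N = (i < t)%N.
  by move=> it; rewrite ltnS ltn_neqAle (it : (i : nat) != t).
rewrite (others (factors_mix u u' t)) => [|i it]; last by rewrite /factors_mix neq_lt.
rewrite (others (factors_mix u u' t.+1)) // (others (factors_step u u' t)) => [|i it].
  by rewrite /factors_step /factors_mix ltnn ltnSn eqxx -mulrBl.
by rewrite /factors_step /factors_mix neq_lt // (negPf it).
Qed.

Lemma tucker_sub_telescope C C' u u' idx :
  tucker C u idx - tucker C' u' idx =
  tucker (fun k => C k - C' k) u idx + \sum_(t < d) tucker C' (factors_step u u' t) idx.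
Proof.
have mix0 : factors_mix u u' 0 = u by [].
have mixd : factors_mix u u' d = u' by apply: funext => i; rewrite /factors_mix ltn_ord.
pose F t := tucker C' (factors_mix u u' t) idx.
have telescope : \sum_(t < d) (F t - F t.+1) = F 0%N - F d.
  have := @telescope_sumr _ 0 d (fun t => - F t) (leq0n d); rewrite big_mkord.
  by rewrite opprK addrC => <-; apply: eq_bigr => t _; rewrite opprK addrC.
under eq_bigr => t _ do rewrite -tucker_mix_step.
rewrite telescope /F mix0 mixd -tucker_subl; ring.
Qed.

Lemma sumsq_tucker_sub_le C C' u u' (eC eU delta : R) : (0 < r)%N ->
  (forall i, gram_bounded (u i)) -> (forall i, gram_bounded (u' i)) ->
  core_orthogonal C' -> \sum_k C' k ^+ 2 = 1 ->
  \sum_k (C k - C' k) ^+ 2 <= eC ->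
  (forall i p, \sum_j (u i p j - u' i p j) ^+ 2 <= eU) ->
  gram_norm_bound ^+ d * eC <= delta -> gram_norm_bound ^+ d.-1 * eU <= delta ->
  \sum_idx (tucker C u idx - tucker C' u' idx) ^+ 2 <= (d.+1)%:R ^+ 2 * delta.
Proof.
move=> r_gt0 uG u'G C'orth C'1 CC' uu' C_delta u_delta.
have L0 := exprn_ge0 _ gram_norm_bound_ge0.
have core_term : \sum_idx tucker (fun k => C k - C' k) u idx ^+ 2 <= delta.
  apply: le_trans (sumsq_tucker_gram_le _ uG) _.
  by apply: le_trans C_delta; rewrite ler_wpM2l.
have step_term t : \sum_idx tucker C' (factors_step u u' t) idx ^+ 2 <= delta.
  apply: le_trans (@sumsq_tucker_mode_le t (Ordinal r_gt0) C' _ eU C'orth _ _) _.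
  - move=> p; rewrite /factors_step ltnn eqxx /vdot.
    by under eq_bigr do rewrite -expr2; exact: uu'.
  - move=> i it; rewrite /factors_step (negPf it); case: ltnP => _; [exact: u'G | exact: uG].
  - by rewrite C'1 mulr1; exact: u_delta.
under eq_bigr do rewrite tucker_sub_telescope.
apply: le_trans (ler_sum _ (fun idx _ => sqr_addr_sum_le _ _)) _.
rewrite -mulr_sumr big_split /= exchange_big /= expr2 -mulrA ler_wpM2l //.
apply: le_trans (lerD core_term (ler_sum _ (fun t _ => step_term t))) _.
by rewrite sumr_const card_ord -mulrS mulr_natl.
Qed.

End Tucker.

Lemma powR_half (R : realType) (x : R) (m : nat) : 0 <= x ->
  x `^ (m%:R / 2) = Num.sqrt x ^+ m.
Proof. by move=> x0; rewrite mulrC powRrM powR12_sqrt // powR_mulrn // sqrtr_ge0. Qed.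

Section CoveringBound.
Variables (R : realType) (d n r : nat) (theta eps mu Rb : R).
Hypotheses (d_gt0 : (0 < d)%N) (n_gt0 : (0 < n)%N) (r_gt0 : (0 < r)%N).
Hypotheses (eps_gt0 : 0 < eps) (eps_lt1 : eps < 1) (mu_gt0 : 0 < mu) (mu_lt1 : mu < 1).
Hypothesis Rb_ge1 : 1 <= Rb.

Let Rb_gt0 : 0 < Rb. Proof. exact: lt_le_trans Rb_ge1. Qed.
Let mu_ge0 : 0 <= mu. Proof. exact: ltW. Qed.

Definition params : Type :=
  (({ffun 'I_d -> 'I_r} -> R) * ('I_d -> 'I_r -> 'I_n -> R))%type.

Definition admissible (p : params) : Prop :=
  [/\ forall i k, vnorm2 (p.2 i k) <= Rb,
      forall i k k', k != k' -> `|vdot (p.2 i k) (p.2 i k')| <= mu,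
      Num.sqrt (\sum_k p.1 k ^+ 2) = 1,
      core_orthogonal p.1
    & theta <= frob (tucker p.1 p.2)].

Lemma admissible_Bset p : admissible p -> @Bset R d n r Rb mu theta (tucker p.1 p.2).
Proof. by case=> *; exists p.1, p.2. Qed.

Lemma Bset_admissible X :
  @Bset R d n r Rb mu theta X -> exists2 p, admissible p & tucker p.1 p.2 = X.
Proof.
case=> C [u [XE ? ? [? ?] ?]]; have tuckerE : tucker C u = X by apply/funext => idx; rewrite XE.
by exists (C, u); rewrite //=; split; rewrite //= tuckerE.
Qed.

Section Admissible.
Variable p : params.
Hypothesis p_adm : admissible p.

Lemma admissible_sumsq_core : \sum_k p.1 k ^+ 2 = 1.
Proof.
have s0 : 0 <= \sum_k p.1 k ^+ 2 by apply: sumr_ge0 => k _; exact: sqr_ge0.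
by case: p_adm => _ _ C1 _ _; rewrite -(sqr_sqrtr s0) C1 expr1n.
Qed.

Lemma admissible_sumsq_factor i k : \sum_j p.2 i k j ^+ 2 <= Rb ^+ 2.
Proof.
have s0 : 0 <= \sum_j p.2 i k j ^+ 2 by apply: sumr_ge0 => j _; exact: sqr_ge0.
case: p_adm => /(_ i k) uRb _ _ _ _; rewrite -(sqr_sqrtr s0).
by apply: lerXn2r; rewrite ?nnegrE ?sqrtr_ge0 ?(ltW Rb_gt0).
Qed.

Lemma admissible_gram i : gram_bounded Rb mu (p.2 i).
Proof.
split=> [q|]; last by case: p_adm => _ + _ _ _; apply.
by rewrite /vdot; under eq_bigr do rewrite -expr2; exact: admissible_sumsq_factor.
Qed.

End Admissible.

Definition coord : finType := ({ffun 'I_d -> 'I_r} + 'I_d * 'I_r * 'I_n)%type.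

Definition coords (p : params) (c : coord) : R :=
  match c with inl k => p.1 k | inr ikj => p.2 ikj.1.1 ikj.1.2 ikj.2 end.

(* The grid step of coordinate [c] is [(scale c * weight c)^-1]: [weight]
   maps admissible coordinates into the ball of radius [sqrt #|coord|], and
   [scale] is what the perturbation bound needs for one step to cost [eps]. *)
Definition core_scale : R :=
  (d.+1)%:R / eps * Num.sqrt (Rb ^+ 2 + mu * r%:R) ^+ d.
Definition factor_scale : R :=
  (d.+1)%:R / eps * (Num.sqrt (Rb ^+ 2 + mu * (r ^ d)%:R) * Rb ^+ (d - 1)).

Definition scale (c : coord) : R := if c is inl _ then core_scale else factor_scale.
Definition weight (c : coord) : R :=
  if c is inl _ then Num.sqrt (r ^ d)%:R else Num.sqrt n%:R / Rb.
Definition step (c : coord) : R := (scale c * weight c)^-1.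

Definition levels : nat := Num.truncn (\sum_c Rb / step c).

Definition key (p : params) : {ffun coord -> bool * 'I_levels.+1} :=
  [ffun c => quantize levels (step c) (coords p c)].

Let tolerance_ge2 : 2 <= (d.+1)%:R / eps.
Proof.
rewrite ler_pdivlMr // (@le_trans _ _ 2) ?ler_nat ?ltnS //.
by rewrite -[leRHS]mulr1 ler_wpM2l // ltW.
Qed.

Let sqrt_ge1 m : 1 <= Num.sqrt (Rb ^+ 2 + mu * m%:R).
Proof.
rewrite -sqrtr1 ler_sqrt; last by rewrite addr_ge0 ?sqr_ge0 // mulr_ge0 // ltW.
by rewrite -[1]addr0 lerD ?exprn_ege1 // mulr_ge0 // ltW.
Qed.

Lemma core_scale_ge2 : 2 <= core_scale.
Proof.
apply: le_trans tolerance_ge2 _; rewrite -[leLHS]mulr1 ler_wpM2l ?exprn_ege1 ?sqrt_ge1 //.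
exact: le_trans tolerance_ge2.
Qed.

Lemma factor_scale_ge2 : 2 <= factor_scale.
Proof.
apply: le_trans tolerance_ge2 _.
rewrite -[leLHS]mulr1 ler_wpM2l ?mulr_ege1 ?exprn_ege1 ?sqrt_ge1 //.
exact: le_trans tolerance_ge2.
Qed.

Lemma scale_ge2 c : 2 <= scale c.
Proof. by case: c => [k|ikj]; [exact: core_scale_ge2 | exact: factor_scale_ge2]. Qed.

Lemma weight_gt0 c : 0 < weight c.
Proof.
by case: c => [k|ikj] /=; rewrite ?divr_gt0 // sqrtr_gt0 ltr0n ?expn_gt0 ?r_gt0.
Qed.

Lemma step_gt0 c : 0 < step c.
Proof. by rewrite invr_gt0 mulr_gt0 ?weight_gt0 // (lt_le_trans _ (scale_ge2 c)). Qed.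

Lemma coords_le p c : admissible p -> `|coords p c| <= Rb.
Proof.
move=> p_adm; rewrite -(@ler_pXn2r _ 2) ?nnegrE ?(ltW Rb_gt0) // real_normK ?num_real //.
case: c => [k|[[i k] j]] /=.
  apply: le_trans (exprn_ege1 2 Rb_ge1); rewrite -(admissible_sumsq_core p_adm).
  by rewrite (bigD1 k) //= lerDl sumr_ge0 // => k' _; rewrite sqr_ge0.
apply: le_trans (admissible_sumsq_factor p_adm i k).
by rewrite (bigD1 j) //= lerDl sumr_ge0 // => j' _; rewrite sqr_ge0.
Qed.

Lemma truncn_le_levels p c : admissible p ->
  (Num.truncn (`|coords p c| / step c) <= levels)%N.
Proof.
move=> p_adm; apply: le_truncn; apply: le_trans (_ : Rb / step c <= _).
  by apply: ler_wpM2r; [rewrite invr_ge0 (ltW (step_gt0 c)) | exact: coords_le].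
rewrite (bigD1 c) //= lerDl sumr_ge0 // => c' _.
by rewrite divr_ge0 ?(ltW Rb_gt0) ?(ltW (step_gt0 c')).
Qed.

Lemma sumsq_weighted_coords p : admissible p ->
  \sum_c (coords p c * weight c) ^+ 2 <= #|coord|%:R.
Proof.
move=> p_adm; rewrite big_sumType /= card_sum card_ffun !card_prod !card_ord natrD.
apply: lerD.
  under eq_bigr do rewrite exprMn sqr_sqrtr ?ler0n //.
  by rewrite -mulr_suml (admissible_sumsq_core p_adm) mul1r.
under eq_bigr do rewrite exprMn expr_div_n sqr_sqrtr ?ler0n //.
rewrite -mulr_suml -(pair_bigA _ (fun (ik : 'I_d * 'I_r) j => p.2 ik.1 ik.2 j ^+ 2)) /=.
apply: le_trans (_ : (\sum_(ik : 'I_d * 'I_r) Rb ^+ 2) * (n%:R / Rb ^+ 2) <= _).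
  rewrite ler_wpM2r ?divr_ge0 ?sqr_ge0 //.
  by apply: ler_sum => ik _; exact: admissible_sumsq_factor.
rewrite sumr_const card_prod !card_ord -mulr_natr !natrM.
by rewrite le_eqVlt; apply/orP; left; apply/eqP; field; rewrite gt_eqF.
Qed.

Lemma key_in_ellipsoid p : admissible p ->
  \sum_c ((key p c).2%:R / scale c) ^+ 2 <= #|coord|%:R.
Proof.
move=> p_adm; apply: le_trans (sumsq_weighted_coords p_adm); apply: ler_sum => c _.
have scale_gt0 : 0 < scale c by apply: lt_le_trans (scale_ge2 c).
rewrite -[(coords p c * _) ^+ 2]real_normK ?num_real // normrM (gtr0_norm (weight_gt0 c)).
apply: lerXn2r; rewrite ?nnegrE.
- by rewrite divr_ge0 // ltW.
- by rewrite mulr_ge0 // ltW ?weight_gt0.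
rewrite ler_pdivrMr // ffunE.
apply: le_trans (quantize_level (step_gt0 c) (truncn_le_levels _ p_adm)) _.
by rewrite /step invrK mulrA mulrAC.
Qed.

Lemma card_keys :
  #|[set z | `[< exists2 p, admissible p & key p = z >]]|%:R <= \prod_c (6 * scale c).
Proof.
apply: card_lattice_ellipsoid_le => [|z]; first exact: scale_ge2.
by rewrite inE => /asboolP[p p_adm <-]; exact: key_in_ellipsoid.
Qed.

Lemma key_close p p' c : admissible p -> admissible p' -> key p = key p' ->
  `|coords p c - coords p' c| <= step c.
Proof.
move=> p_adm p'_adm pp'; have : key p c = key p' c by rewrite pp'.
rewrite !ffunE => qq.
by apply/ltW/(quantize_close (step_gt0 c) _ _ qq); exact: truncn_le_levels.
Qed.

Lemma sumsq_core_sub_le p p' : admissible p -> admissible p' -> key p = key p' ->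
  \sum_k (p.1 k - p'.1 k) ^+ 2 <= core_scale ^-2.
Proof.
move=> p_adm p'_adm pp'.
pose h := (core_scale * Num.sqrt (r ^ d)%:R)^-1.
apply: le_trans (@sumsq_le_card _ _ (fun k => p.1 k - p'.1 k) h
  (fun k => key_close (inl k) p_adm p'_adm pp' : `|p.1 k - p'.1 k| <= h)) _.
have core_gt0 : 0 < core_scale by exact: lt_le_trans core_scale_ge2.
have rd_gt0 : 0 < (r ^ d)%:R :> R by rewrite ltr0n expn_gt0 r_gt0.
rewrite card_ffun !card_ord /h exprVn exprMn sqr_sqrtr ?ler0n //.
by rewrite le_eqVlt; apply/orP; left; apply/eqP; field; rewrite !gt_eqF.
Qed.

Lemma sumsq_factor_sub_le p p' i k : admissible p -> admissible p' -> key p = key p' ->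
  \sum_j (p.2 i k j - p'.2 i k j) ^+ 2 <= Rb ^+ 2 / factor_scale ^+ 2.
Proof.
move=> p_adm p'_adm pp'.
pose h := (factor_scale * (Num.sqrt n%:R / Rb))^-1.
apply: le_trans (@sumsq_le_card _ _ (fun j => p.2 i k j - p'.2 i k j) h
  (fun j => key_close (inr (i, k, j)) p_adm p'_adm pp' : `|p.2 i k j - p'.2 i k j| <= h)) _.
have factor_gt0 : 0 < factor_scale by exact: lt_le_trans factor_scale_ge2.
have n_pos : 0 < n%:R :> R by rewrite ltr0n.
rewrite card_ord /h exprVn exprMn expr_div_n sqr_sqrtr ?ler0n //.
by rewrite le_eqVlt; apply/orP; left; apply/eqP; field; rewrite !gt_eqF.
Qed.

Lemma core_error_le :
  gram_norm_bound r Rb mu ^+ d * core_scale ^-2 <= (eps / (d.+1)%:R) ^+ 2.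
Proof.
set S := Num.sqrt (Rb ^+ 2 + mu * r%:R).
have S2 : S ^+ 2 = Rb ^+ 2 + mu * r%:R by rewrite sqr_sqrtr // addr_ge0 ?sqr_ge0 ?mulr_ge0.
have S_gt0 : 0 < S by rewrite sqrtr_gt0 ltr_pwDl ?exprn_gt0 ?mulr_ge0.
rewrite (_ : (eps / _) ^+ 2 = (S ^+ d) ^+ 2 * core_scale ^-2); last first.
  by rewrite /core_scale -/S; field; rewrite !gt_eqF ?exprn_gt0.
rewrite ler_wpM2r ?invr_ge0 ?sqr_ge0 // -exprM mulnC exprM S2.
apply: lerXn2r; rewrite ?nnegrE ?gram_norm_bound_ge0 ?addr_ge0 ?sqr_ge0 ?mulr_ge0 //.
by rewrite /gram_norm_bound lerD2l mulrC ler_wpM2l // ler_nat leq_pred.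
Qed.

Lemma factor_error_le :
  gram_norm_bound r Rb mu ^+ d.-1 * (Rb ^+ 2 / factor_scale ^+ 2) <= (eps / (d.+1)%:R) ^+ 2.
Proof.
set S := Num.sqrt (Rb ^+ 2 + mu * (r ^ d)%:R).
have S2 : S ^+ 2 = Rb ^+ 2 + mu * (r ^ d)%:R.
  by rewrite sqr_sqrtr // addr_ge0 ?sqr_ge0 ?mulr_ge0.
have S_gt0 : 0 < S by rewrite sqrtr_gt0 ltr_pwDl ?exprn_gt0 ?mulr_ge0.
rewrite (_ : (eps / _) ^+ 2 = (S * Rb ^+ d.-1) ^+ 2 / factor_scale ^+ 2); last first.
  by rewrite /factor_scale -/S subn1; field; rewrite !gt_eqF ?exprn_gt0.
rewrite mulrA ler_wpM2r ?invr_ge0 ?sqr_ge0 // exprMn S2 -exprM mulnC exprM.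
rewrite -{2}(prednK d_gt0); apply: gram_bound_expr_le => //; last by rewrite mu_ge0 ltW.
exact: exprn_ege1.
Qed.

Lemma tucker_close p p' : admissible p -> admissible p' -> key p = key p' ->
  frob (fun idx => tucker p.1 p.2 idx - tucker p'.1 p'.2 idx) <= eps.
Proof.
move=> p_adm p'_adm pp'.
rewrite /frob -(ger0_norm (ltW eps_gt0)) -sqrtr_sqr ler_sqrt ?sqr_ge0 //.
rewrite (_ : eps ^+ 2 = (d.+1)%:R ^+ 2 * (eps / (d.+1)%:R) ^+ 2); last by field.
apply: (sumsq_tucker_sub_le mu_ge0 r_gt0 (admissible_gram p_adm) (admissible_gram p'_adm)).
- by case: p'_adm.
- exact: admissible_sumsq_core.
- exact: sumsq_core_sub_le.
- by move=> i k; exact: sumsq_factor_sub_le.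
- exact: core_error_le.
- exact: factor_error_le.
Qed.

Lemma prod_scale :
  \prod_c (6 * scale c) =
  (6 * (d.+1)%:R / eps) ^+ (r ^ d + r * n * d)%N
    * (Rb ^+ 2 + mu * r%:R) `^ (((r ^ d) * d)%N%:R / 2)
    * (Rb ^+ 2 + mu * (r ^ d)%N%:R) `^ ((d * n * r)%N%:R / 2)
    * Rb ^+ ((d - 1) * d * n * r)%N.
Proof.
rewrite !powR_half ?addr_ge0 ?sqr_ge0 ?mulr_ge0 //.
rewrite big_sumType /= !prodr_const card_ffun !card_prod !card_ord /core_scale /factor_scale.
have -> : (r * n * d = d * r * n)%N by ring.
have -> : (r ^ d * d = d * r ^ d)%N by ring.
have -> : (d * n * r = d * r * n)%N by ring.
have -> : ((d - 1) * d * n * r = (d - 1) * (d * r * n))%N by ring.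
by rewrite !mulrA !exprMn -!exprM !exprD; ring.
Qed.

Theorem covering_number_Bset_le :
  (covering_number (@Bset R d n r Rb mu theta) eps <= (\prod_c (6 * scale c))%:E)%E.
Proof.
apply: le_trans (covering_number_le_card admissible_Bset Bset_admissible tucker_close) _.
by rewrite lee_fin; exact: card_keys.
Qed.

End CoveringBound.

Theorem lemma2 (R : realType) (d n r : nat) (theta eps mu Rb : R) :
  (1 <= d)%N -> (1 <= n)%N -> (1 <= r)%N ->
  0 <= theta -> 0 < eps < 1 -> 0 < mu < 1 -> 1 <= Rb ->
  (covering_number (@Bset R d n r Rb mu theta) eps <=
   ((6 * (d.+1)%:R / eps) ^+ (r ^ d + r * n * d)%N
    * (Rb ^+ 2 + mu * r%:R) `^ (((r ^ d) * d)%N%:R / 2)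
    * (Rb ^+ 2 + mu * (r ^ d)%N%:R) `^ ((d * n * r)%N%:R / 2)
    * Rb ^+ ((d - 1) * d * n * r)%N)%:E)%E.
Proof.
move=> d_gt0 n_gt0 r_gt0 _ /andP[eps_gt0 eps_lt1] /andP[mu_gt0 mu_lt1] Rb_ge1.
by rewrite -prod_scale //; exact: covering_number_Bset_le.
Qed.
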